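(* There exist neuronal networks $\mathcal N$ all of whose neurons satisfy Dale's Principle (each neuron is excitatory or inhibitory) but which are not a dynamical optimum conditioned to their synaptical equivalence class, i.e. there is a network $\mathcal N'$ synaptically equivalent to $\mathcal N$ with $\mathcal N'\not\sqsubseteq\mathcal N$.
   Context: A neuronal network $\mathcal N$ consists of $N\ge2$ neurons $i$. Neuron $i$ has a state $x_i=(x_{i,1},\dots,x_{i,k_i})$ in a compact manifold $M_i$ of finite dimension $k_i\ge1$, $x_{i,1}$ being its membrane potential; it has a threshold $\theta_i>0$ and a Lipschitz vector field $f_i$, and isolated it evolves by $dx_i/dt=F_i(x_i):=f_i(x_i)-\vec\theta_i\delta_{\theta_i}(x_{i,1})$, i.e. $\dot x_i=f_i(x_i)$ while $x_{i,1}<\theta_i$, and $x_{i,1}$ is reset to $0$ when it reaches $\theta_i$ (spike). For $i\neq j$ the synaptic action $\Delta_{i,j}$ is a real function of $x_j$, identically $0$ or of constant sign; when $i$ spikes, $x_{j,1}$ jumps by $\Delta_{i,j}$. The network evolves by $dx_j/dt=F_j(x_j)+\sum_{i\ne j}\vec\Delta_{i,j}\delta_{\theta_i}(x_{i,1})$ with the refractory/avalanche rule (a neuron pushed to its threshold by simultaneous actions spikes at that instant; each neuron spikes at most once per instant and ignores actions arriving at the instant it spikes). For every $X_0\in M:=M_1\times\cdots\times M_N$ the solution is assumed to exist and be unique, defining the dynamics $\Phi(X_0,t)$, $t\ge0$. No neuron is indifferent: for each $i$ some $\Delta_{i,j}\not\equiv0$. A neuron $i$ is excitatory (resp. inhibitory)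 if $\Delta_{i,j}>0$ (resp. $\Delta_{i,j}<0$) for every $j$ with $\Delta_{i,j}\not\equiv0$; it is mixed if it is neither. Dale's Principle: no neuron is mixed. Two neurons $i\ne j$ are structurally identical if $F_i=F_j$, $\Delta_{i,j}\equiv\Delta_{j,i}\equiv0$ and $\Delta_{h,i}=\Delta_{h,j}$ for all $h\ne i,j$. A homogeneous part is a maximal set of pairwise structurally identical neurons. A synaptical unit is a block of a partition of a homogeneous part $A$ into a minimal number of sets $U$ such that for each neuron $h\notin A$ at most one $i\in U$ has $\Delta_{i,h}\not\equiv0$. For a unit $U$ and homogeneous part $B$, $\Delta_{U,B}$ denotes $0$ if $\Delta_{i,h}\equiv0$ for all $i\in U,h\in B$, and otherwise the common value $\Delta_{i,h}$ ($h\in B$) for the unique $i\in U$ sending nonzero actions to $B$. Networks $\mathcal N,\mathcal N'$ are synaptically equivalent if they have the same number of homogeneous parts and the same number of synaptical units, and there is a bijection $\varphi$ from the units of $\mathcal N$ onto the units of $\mathcal N'$ mapping the units of each homogeneous part $B$ onto all units of a homogeneous part $\varphi(B)$ of $\mathcal N'$, such that $\Delta_{U,B}=\Delta_{\varphi(U),\varphi(B)}$ for all units $U$ and parts $B$, and $F_i=F_{i'}$ for all $i\in U$, $i'\in\varphi(U)$. $\mathcal N'\sqsubseteq\mathcal N$ means: there is a continuous injective $\psi:M'\to M$ with $\psi(\Phi'(X'_0,t))=\Phi(\psi(X'_0),t)$ for all $X'_0\in M'$, $t\ge0$, where $\Phi,\Phi'$ are the dynamics of $\mathcal N,\mathcal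 N'$ on $M,M'$. A network $\mathcal N$ is a dynamical optimum conditioned to its synaptical equivalence class $\mathcal C$ if $\mathcal N'\sqsubseteq\mathcal N$ for all $\mathcal N'\in\mathcal C$. *)

From Stdlib Require Import Reals Lra Lia Arith Bool.
Open Scope R_scope.

(** Neurons are 0 .. nN-1.  Neuron i has state x_i : nat -> R, whose relevant
   coordinates are 0 .. kk i - 1 (coordinate 0 = membrane potential x_{i,1});
   its state space M_i is the compact box  prod_{m < kk i} [lo i m, hi i m]
   in R^{kk i} (coordinates >= kk i are fixed to 0).  A global state is
   X : nat -> nat -> R, X i = state of neuron i. *)
Record Net : Type := mkNet {
  nN : nat;
  kk : nat -> nat;
  lo : nat -> nat -> R;
  hi : nat -> nat -> R;
  th : nat -> R;
  fv : nat -> (nat -> R) -> (nat -> R);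
  dl : nat -> nat -> (nat -> R) -> R           (* dl i j = Delta_{i,j}, a function of x_j *)
}.

Fixpoint sumR (n : nat) (g : nat -> R) : R :=
  match n with O => 0 | S n' => sumR n' g + g n' end.

Fixpoint sumN (n : nat) (g : nat -> nat) : nat :=
  match n with O => O | S n' => (sumN n' g + g n')%nat end.

Definition InMi (n : Net) (i : nat) (x : nat -> R) : Prop :=
  (forall m, (m < kk n i)%nat -> lo n i m <= x m <= hi n i m) /\
  (forall m, (kk n i <= m)%nat -> x m = 0).

Definition InM (n : Net) (X : nat -> nat -> R) : Prop :=
  (forall i, (i < nN n)%nat -> InMi n i (X i)) /\
  (forall i m, (nN n <= i)%nat -> X i m = 0).

Definition normi (n : Net) (i : nat) (x : nat -> R) : R :=
  sumR (kk n i) (fun m => Rabs (x m)).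

Definition dist (n : Net) (X Y : nat -> nat -> R) : R :=
  sumR (nN n) (fun i => sumR (kk n i) (fun m => Rabs (X i m - Y i m))).

Definition Zero (n : Net) (i j : nat) : Prop :=
  forall x, InMi n j x -> dl n i j x = 0.
Definition NZ (n : Net) (i j : nat) : Prop := ~ Zero n i j.

(** * Dynamics: spikes, avalanche and resets.
   spk n Y s j : neuron j belongs to the set of neurons spiking at the current
   instant after s rounds of the avalanche, given the pre-jump state Y. *)
Fixpoint spk (n : Net) (Y : nat -> nat -> R) (s : nat) (j : nat) : bool :=
  match s with
  | O => Nat.ltb j (nN n) && (if Rle_dec (th n j) (Y j O) then true else false)
  | S s' => spk n Y s' j ||
      (Nat.ltb j (nN n) &&
       (if Rle_dec (th n j)
              (Y j O + sumR (nN n) (fun i =>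
                 if negb (Nat.eqb i j) && spk n Y s' i then dl n i j (Y j) else 0))
        then true else false))
  end.

(** The (final) set of neurons spiking at the instant: the avalanche
    stabilises after at most nN rounds. *)
Definition spikes (n : Net) (Y : nat -> nat -> R) (j : nat) : bool :=
  spk n Y (nN n) j.

Definition jump (n : Net) (Y : nat -> nat -> R) : nat -> nat -> R :=
  fun i m =>
    if Nat.ltb i (nN n) && Nat.eqb m O then
      (if spikes n Y i then 0
       else Y i O + sumR (nN n) (fun h =>
              if negb (Nat.eqb h i) && spikes n Y h then dl n h i (Y i) else 0))
    else Y i m.

Definition FlowPt (n : Net) (X : R -> nat -> nat -> R) (s : R) : Prop :=
  (forall i, (i < nN n)%nat -> X s i O < th n i) /\
  (forall i m, (i < nN n)%nat -> (m < kk n i)%nat ->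
     derivable_pt_lim (fun u => X u i m) s (fv n i (X s i) m)).

(** Convention: X is left-continuous, X t is the state just before the
   (possible) spikes at instant t; immediately after t the state is
   jump n (X t).  Spike instants are locally finite. *)
Definition Sol (n : Net) (X0 : nat -> nat -> R) (X : R -> nat -> nat -> R) : Prop :=
  X 0 = X0 /\
  (forall t, 0 <= t -> InM n (X t)) /\
  (forall t, 0 <= t -> exists eps, 0 < eps /\
     (forall s, t < s < t + eps -> FlowPt n X s) /\
     (forall i m e, 0 < e -> exists d, 0 < d /\
        forall s, t < s < t + d -> Rabs (X s i m - jump n (X t) i m) < e)) /\
  (forall t, 0 < t -> exists eps, 0 < eps /\
     (forall s, 0 < s -> t - eps < s < t -> FlowPt n X s) /\
     (forall i m e, 0 < e -> exists d, 0 < d /\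
        forall s, t - d < s < t -> Rabs (X s i m - X t i m) < e)).

Definition IsNetwork (n : Net) : Prop :=
  (2 <= nN n)%nat /\
  (forall i, (i < nN n)%nat ->
     (1 <= kk n i)%nat /\
     (forall m, (m < kk n i)%nat -> lo n i m < hi n i m) /\
     0 < th n i /\
     (exists L, forall x y, InMi n i x -> InMi n i y ->
        normi n i (fun m => fv n i x m - fv n i y m)
          <= L * normi n i (fun m => x m - y m)) /\
     (forall j, (j < nN n)%nat -> j <> i ->
        Zero n i j \/
        (forall x, InMi n j x -> 0 < dl n i j x) \/
        (forall x, InMi n j x -> dl n i j x < 0)) /\
     (exists j, (j < nN n)%nat /\ j <> i /\ NZ n i j)) /\
  (forall X0, InM n X0 ->
     (exists X, Sol n X0 X) /\
     (forall X Y, Sol n X0 X -> Sol n X0 Y -> forall t, 0 <= t -> X t = Y t)).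

Definition Excitatory (n : Net) (i : nat) : Prop :=
  forall j, (j < nN n)%nat -> j <> i -> NZ n i j ->
    forall x, InMi n j x -> 0 < dl n i j x.
Definition Inhibitory (n : Net) (i : nat) : Prop :=
  forall j, (j < nN n)%nat -> j <> i -> NZ n i j ->
    forall x, InMi n j x -> dl n i j x < 0.

Definition Dale (n : Net) : Prop :=
  forall i, (i < nN n)%nat -> Excitatory n i \/ Inhibitory n i.

Definition SameF (n : Net) (i : nat) (n' : Net) (j : nat) : Prop :=
  kk n i = kk n' j /\
  (forall m, (m < kk n i)%nat -> lo n i m = lo n' j m /\ hi n i m = hi n' j m) /\
  th n i = th n' j /\
  (forall x, InMi n i x -> forall m, (m < kk n i)%nat -> fv n i x m = fv n' j x m).

Definition StructId (n : Net) (i j : nat) : Prop :=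
  (i < nN n)%nat /\ (j < nN n)%nat /\ i <> j /\
  SameF n i n j /\ Zero n i j /\ Zero n j i /\
  (forall h, (h < nN n)%nat -> h <> i -> h <> j ->
     forall x, InMi n i x -> dl n h i x = dl n h j x).

Definition HomPart (n : Net) (A : nat -> Prop) : Prop :=
  (forall i, A i -> (i < nN n)%nat) /\
  (exists i, A i) /\
  (forall i j, A i -> A j -> i <> j -> StructId n i j) /\
  (forall B : nat -> Prop,
     (forall i, A i -> B i) -> (forall i, B i -> (i < nN n)%nat) ->
     (forall i j, B i -> B j -> i <> j -> StructId n i j) ->
     forall i, B i -> A i).

(** g labels a partition of part p (neurons i with part i = p) whose blocks U
   satisfy: each neuron h outside the part receives nonzero actions from at
   most one neuron of U. *)
Definition AdmLab (n : Net) (part : nat -> nat) (p : nat) (g : nat -> nat) : Prop :=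
  forall i i' h, (i < nN n)%nat -> (i' < nN n)%nat -> (h < nN n)%nat ->
    part i = p -> part i' = p -> i <> i' -> g i = g i' ->
    part h <> p -> NZ n i h -> NZ n i' h -> False.

(** A unit structure of n: homogeneous parts labelled 0..nP-1 by part; the
   part p is partitioned into the c p synaptical units (p,b), b < c p, the
   neuron i lying in unit (part i, blk i); each such partition is admissible
   and has the minimal number of blocks. *)
Definition ValidUS (n : Net) (nP : nat) (part : nat -> nat) (c : nat -> nat)
    (blk : nat -> nat) : Prop :=
  (forall i, (i < nN n)%nat -> (part i < nP)%nat) /\
  (forall p, (p < nP)%nat -> HomPart n (fun i => (i < nN n)%nat /\ part i = p)) /\
  (forall i, (i < nN n)%nat -> (blk i < c (part i))%nat) /\
  (forall p b, (p < nP)%nat -> (b < c p)%nat ->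
     exists i, (i < nN n)%nat /\ part i = p /\ blk i = b) /\
  (forall p, (p < nP)%nat -> AdmLab n part p blk) /\
  (forall p, (p < nP)%nat -> forall (c0 : nat) (g : nat -> nat),
     (forall i, (i < nN n)%nat -> part i = p -> (g i < c0)%nat) ->
     AdmLab n part p g -> (c p <= c0)%nat).

Definition InUnit (n : Net) (part blk : nat -> nat) (p b i : nat) : Prop :=
  (i < nN n)%nat /\ part i = p /\ blk i = b.
Definition InPart (n : Net) (part : nat -> nat) (q h : nat) : Prop :=
  (h < nN n)%nat /\ part h = q.

(** DUB ... p b q D :  Delta_{U,B} = D  (on the state space of the neurons of
   B), for the unit U = (p,b) and the homogeneous part B = q. *)
Definition DUB (n : Net) (part blk : nat -> nat) (p b q : nat) (D : (nat -> R) -> R)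
  : Prop :=
  ((forall i h, InUnit n part blk p b i -> InPart n part q h -> h <> i -> Zero n i h) /\
   (forall h x, InPart n part q h -> InMi n h x -> D x = 0))
  \/
  (exists i, InUnit n part blk p b i /\
     (exists h, InPart n part q h /\ h <> i /\ NZ n i h) /\
     (forall h x, InPart n part q h -> h <> i -> InMi n h x -> dl n i h x = D x)).

(** Synaptic equivalence.  The unit bijection phi is (p,b) |-> (sg p, tau p b),
   sg being the induced bijection of homogeneous parts. *)
Definition SynEquiv (n n' : Net) : Prop :=
  exists (nP : nat) (part c blk : nat -> nat)
         (nP' : nat) (part' c' blk' : nat -> nat)
         (sg : nat -> nat) (tau : nat -> nat -> nat),
    ValidUS n nP part c blk /\ ValidUS n' nP' part' c' blk' /\
    nP = nP' /\
    sumN nP c = sumN nP' c' /\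
    (forall p, (p < nP)%nat -> (sg p < nP')%nat) /\
    (forall p q, (p < nP)%nat -> (q < nP)%nat -> sg p = sg q -> p = q) /\
    (forall q, (q < nP')%nat -> exists p, (p < nP)%nat /\ sg p = q) /\
    (forall p, (p < nP)%nat ->
       (forall b, (b < c p)%nat -> (tau p b < c' (sg p))%nat) /\
       (forall b b', (b < c p)%nat -> (b' < c p)%nat -> tau p b = tau p b' -> b = b') /\
       (forall b', (b' < c' (sg p))%nat -> exists b, (b < c p)%nat /\ tau p b = b')) /\
    (forall p b q, (p < nP)%nat -> (b < c p)%nat -> (q < nP)%nat ->
       exists D, DUB n part blk p b q D /\
                 DUB n' part' blk' (sg p) (tau p b) (sg q) D) /\
    (forall p b i i', (p < nP)%nat -> (b < c p)%nat ->
       InUnit n part blk p b i -> InUnit n' part' blk' (sg p) (tau p b) i' ->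
       SameF n i n' i').

Definition Embeds (n' n : Net) : Prop :=
  exists psi : (nat -> nat -> R) -> (nat -> nat -> R),
    (forall X, InM n' X -> InM n (psi X)) /\
    (forall X, InM n' X -> forall e, 0 < e -> exists d, 0 < d /\
       forall Y, InM n' Y -> dist n' X Y < d -> dist n (psi X) (psi Y) < e) /\
    (forall X Y, InM n' X -> InM n' Y -> psi X = psi Y -> X = Y) /\
    (forall X0 X' X, InM n' X0 -> Sol n' X0 X' -> Sol n (psi X0) X ->
       forall t, 0 <= t -> psi (X' t) = X t).

Definition DynOptimum (n : Net) : Prop :=
  forall n', IsNetwork n' -> SynEquiv n n' -> Embeds n' n.

(* Take one-dimensional neurons with zero vector field, state space [-1,1],
   threshold 1 and weak excitatory actions (1 - x)/10.  Such a network spikes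
   only at time 0 and rests afterwards, so an embedding psi must be injective
   and satisfy psi o jump' = jump o psi.  With at most five neurons the actions
   are too weak to cause an avalanche, and a state is determined by its image
   under jump together with its set of firing neurons.

   In such a network with N' neurons each of the 2^N' firing patterns is
   realised by a state jumping to 0.  The psi-images of these states share one
   image under jump, so they are separated by their firing patterns, and an
   embedding into a network with N < N' neurons is impossible.  It remains to
   exhibit synaptically equivalent networks with 3 and 4 neurons: in the
   latter, two structurally identical neurons form a single synaptical unit. *)
From Stdlib Require Import Reals Lra Lia Arith Bool List FunctionalExtensionality.
Open Scope R_scope.

Lemma sumR_ext n f g : (forall k, (k < n)%nat -> f k = g k) -> sumR n f = sumR n g.
Proof.
  induction n as [|n IH]; simpl; intros H; [reflexivity|].
  rewrite IH by (intros; apply H; lia). rewrite H by lia. reflexivity.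
Qed.

Lemma sumR_le n f c : (forall k, (k < n)%nat -> f k <= c) -> sumR n f <= INR n * c.
Proof.
  induction n as [|n IH]; cbn [sumR]; intros H; [simpl; lra|].
  rewrite S_INR. assert (H1 := H n ltac:(lia)).
  assert (H2 : sumR n f <= INR n * c) by (apply IH; intros; apply H; lia). lra.
Qed.

Lemma sumR_ge0 n f : (forall k, (k < n)%nat -> 0 <= f k) -> 0 <= sumR n f.
Proof.
  induction n as [|n IH]; simpl; intros H; [lra|].
  assert (H1 := H n ltac:(lia)).
  assert (H2 : 0 <= sumR n f) by (apply IH; intros; apply H; lia). lra.
Qed.

Lemma sumR_scal n a f : sumR n (fun k => a * f k) = a * sumR n f.
Proof. induction n as [|n IH]; simpl; [ring|]. rewrite IH. ring. Qed.

Lemma sumR_eq0 n f : (forall k, (k < n)%nat -> f k = 0) -> sumR n f = 0.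
Proof.
  intros H. rewrite (sumR_ext n f (fun k => 0 * 0)).
  - rewrite sumR_scal. ring.
  - intros; rewrite H by lia; ring.
Qed.

Lemma sumR_indicator_bound n (b : nat -> bool) c : (n <= 5)%nat -> 0 <= c ->
  0 <= sumR n (fun k => if b k then c else 0) <= 5 * c.
Proof.
  intros Hn Hc. split.
  - apply sumR_ge0. intros k _. destruct (b k); lra.
  - eapply Rle_trans. apply sumR_le with (c := c). intros k _. destruct (b k); lra.
    assert (INR n <= 5) by (replace 5 with (INR 5) by (simpl; ring); apply le_INR; auto).
    nra.
Qed.

Lemma Rabs_lt_all_eq c d : (forall e, 0 < e -> Rabs (c - d) < e) -> c = d.
Proof.
  intros H. destruct (Req_dec c d) as [|Hn]; auto. exfalso.
  assert (Hp : 0 < Rabs (c - d)) by (apply Rabs_pos_lt; lra).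
  specialize (H _ Hp). lra.
Qed.

Lemma derivable_pt_lim_locally_const (g : R -> R) t eps : 0 < eps ->
  (forall u, Rabs (u - t) < eps -> g u = g t) -> derivable_pt_lim g t 0.
Proof.
  intros He Hc e Hpe. exists (mkposreal eps He). intros h Hh0 Hh. simpl in Hh.
  rewrite (Hc (t + h)) by (replace (t + h - t) with h by ring; exact Hh).
  replace ((g t - g t) / h - 0) with 0 by (field; auto). rewrite Rabs_R0. lra.
Qed.

Lemma derivable_pt_lim0_const (g : R -> R) a b :
  (forall s, a < s < b -> derivable_pt_lim g s 0) ->
  forall s1 s2, a < s1 < b -> a < s2 < b -> g s1 = g s2.
Proof.
  intros H.
  assert (K : forall s1 s2, a < s1 < b -> a < s2 < b -> s1 < s2 -> g s1 = g s2).
  { intros s1 s2 H1 H2 H12.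
    destruct (MVT_cor2 g (fun _ => 0) s1 s2 H12) as [c [Hc _]].
    { intros c Hc. apply H. lra. }
    lra. }
  intros s1 s2 H1 H2. destruct (Rtotal_order s1 s2) as [h|[h|h]].
  - auto.
  - subst; auto.
  - symmetry; auto.
Qed.

(* The branch [x O >= 1] is a junk value keeping the action positive on all of M_j. *)
Definition weak_excitation (x : nat -> R) : R :=
  if Rlt_dec (x O) 1 then (1 - x O) / 10 else 1.

Lemma weak_excitation_pos x : 0 < weak_excitation x.
Proof. unfold weak_excitation. destruct (Rlt_dec (x O) 1); lra. Qed.

Definition frozenNet (N : nat) (adj : nat -> nat -> bool) : Net :=
  mkNet N (fun _ => 1%nat) (fun _ _ => -1) (fun _ _ => 1) (fun _ => 1)
    (fun _ _ _ => 0) (fun i j x => if adj i j then weak_excitation x else 0).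

Section FrozenNet.
Variable N : nat.
Variable adj : nat -> nat -> bool.
Hypothesis HN : (N <= 5)%nat.
Let n := frozenNet N adj.

Definition fires (X : nat -> nat -> R) j : bool := if Rle_dec 1 (X j O) then true else false.

Lemma InMi_zero j : InMi n j (fun _ => 0).
Proof. split; simpl; intros; lra || reflexivity. Qed.

Lemma Zero_frozenNet i j : adj i j = false -> Zero n i j.
Proof. intros H x _. simpl. rewrite H. reflexivity. Qed.

Lemma NZ_frozenNet i j : NZ n i j <-> adj i j = true.
Proof.
  split; intros H.
  - destruct (adj i j) eqn:E; [reflexivity|]. exfalso; apply H, Zero_frozenNet, E.
  - intros HZ. specialize (HZ _ (InMi_zero j)). simpl in HZ. rewrite H in HZ.
    pose proof (weak_excitation_pos (fun _ => 0)). lra.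
Qed.

Lemma InM_pot_bound Y : InM n Y -> forall j, (j < N)%nat -> -1 <= Y j O <= 1.
Proof. intros [H _] j Hj. destruct (H j Hj) as [H1 _]. apply (H1 O). simpl; lia. Qed.

Lemma InM_other Z i m : InM n Z -> ((N <= i)%nat \/ m <> O) -> Z i m = 0.
Proof.
  intros [H1 H2] [H|H]. apply H2; auto.
  destruct (le_lt_dec N i) as [h|h]. apply H2; auto.
  destruct (H1 i h) as [_ H3]. apply H3. simpl; lia.
Qed.

Lemma InM_ext Y Z : InM n Y -> InM n Z ->
  (forall i, (i < N)%nat -> Y i O = Z i O) -> Y = Z.
Proof.
  intros HY HZ H. apply functional_extensionality; intros i.
  apply functional_extensionality; intros m.
  destruct (le_lt_dec N i) as [Hi|Hi]; [rewrite !InM_other by auto; reflexivity|].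
  destruct (Nat.eq_dec m O) as [->|Hm]; [auto|rewrite !InM_other by auto; reflexivity].
Qed.

(* At most five actions of size at most (1 - x)/10 cannot lift x to threshold 1. *)
Lemma input_below_gap Y j (b : nat -> bool) : Y j O < 1 ->
  0 <= sumR N (fun i => if b i then dl n i j (Y j) else 0) < 1 - Y j O.
Proof.
  intros H.
  assert (Hle : forall i, (if b i then dl n i j (Y j) else 0)
                  = if b i && adj i j then (1 - Y j O) / 10 else 0).
  { intros i. simpl. unfold weak_excitation. destruct (b i), (adj i j); simpl; auto.
    destruct (Rlt_dec (Y j O) 1); lra. }
  rewrite (sumR_ext _ _ _ (fun i _ => Hle i)).
  pose proof (sumR_indicator_bound N (fun i => b i && adj i j) ((1 - Y j O) / 10) HN
    ltac:(lra)). lra.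
Qed.

Lemma spk_no_avalanche Y (HY : forall j, (j < N)%nat -> Y j O <= 1) :
  forall s j, spk n Y s j = spk n Y O j.
Proof.
  induction s as [|s IH]; intros j; [reflexivity|].
  change (spk n Y (S s) j) with (spk n Y s j ||
      (Nat.ltb j (nN n) &&
       (if Rle_dec (th n j)
              (Y j O + sumR (nN n) (fun i =>
                 if negb (Nat.eqb i j) && spk n Y s i then dl n i j (Y j) else 0))
        then true else false))).
  rewrite IH. destruct (spk n Y O j) eqn:E; [reflexivity|]. simpl in E |- *.
  destruct (Nat.ltb j N) eqn:Ej; [|reflexivity]. simpl in E.
  destruct (Rle_dec 1 (Y j O)) as [|Hlt]; [discriminate|].
  destruct (Rle_dec 1 _) as [Hc|]; [|reflexivity].
  exfalso. pose proof (input_below_gap Y j (fun i => negb (Nat.eqb i j) && spk n Y s i)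
     ltac:(lra)) as Hgap. simpl in Hgap. lra.
Qed.

Lemma spikes_fires Y : InM n Y -> forall j, spikes n Y j = Nat.ltb j N && fires Y j.
Proof.
  intros HY j. unfold spikes. rewrite spk_no_avalanche; [reflexivity|].
  intros k Hk. apply (InM_pot_bound Y HY k Hk).
Qed.

Lemma jump_other Y i m : ((N <= i)%nat \/ m <> O) -> jump n Y i m = Y i m.
Proof.
  intros H. unfold jump. simpl.
  destruct H as [H|H].
  - replace (Nat.ltb i N) with false by (symmetry; apply Nat.ltb_ge; auto). reflexivity.
  - replace (Nat.eqb m 0) with false by (symmetry; apply Nat.eqb_neq; auto).
    rewrite andb_false_r. reflexivity.
Qed.

Lemma jump_pot Y i : InM n Y -> (i < N)%nat ->
  jump n Y i O = if fires Y i then 0 else Y i O + sumR N (fun h =>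
              if negb (Nat.eqb h i) && spikes n Y h then dl n h i (Y i) else 0).
Proof.
  intros HY Hi. unfold jump. simpl nN.
  replace (Nat.ltb i N) with true by (symmetry; apply Nat.ltb_lt; auto). simpl.
  rewrite spikes_fires by auto.
  replace (Nat.ltb i N) with true by (symmetry; apply Nat.ltb_lt; auto). reflexivity.
Qed.

Lemma jump_pot_bound Y i : InM n Y -> (i < N)%nat -> -1 <= jump n Y i O < 1.
Proof.
  intros HY Hi. rewrite jump_pot by auto. unfold fires.
  destruct (Rle_dec 1 (Y i O)); [lra|].
  pose proof (InM_pot_bound Y HY i Hi).
  pose proof (input_below_gap Y i (fun h => negb (Nat.eqb h i) && spikes n Y h) ltac:(lra)).
  lra.
Qed.

Lemma jump_InM Y : InM n Y -> InM n (jump n Y).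
Proof.
  intros HY. split.
  - intros i Hi. split.
    + intros m Hm. simpl in Hm. replace m with O by lia. simpl.
      pose proof (jump_pot_bound Y i HY Hi). lra.
    + intros m Hm. simpl in Hm. rewrite jump_other by lia.
      apply InM_other; auto. simpl in Hm; lia.
  - intros i m Hi. rewrite jump_other by auto. apply InM_other; auto.
Qed.

Lemma jump_below_threshold Y : InM n Y -> (forall i, (i < N)%nat -> Y i O < 1) ->
  jump n Y = Y.
Proof.
  intros HY Hl. apply InM_ext; [apply jump_InM; auto|auto|].
  intros i Hi. rewrite jump_pot by auto. unfold fires. destruct (Rle_dec 1 (Y i O)).
  { specialize (Hl i Hi); lra. }
  rewrite sumR_eq0; [ring|].
  intros k Hk. rewrite spikes_fires by auto. unfold fires.
  destruct (Rle_dec 1 (Y k O)). { specialize (Hl k Hk); lra. }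
  rewrite !andb_false_r. reflexivity.
Qed.

Lemma jump_idem Y : InM n Y -> jump n (jump n Y) = jump n Y.
Proof.
  intros HY. apply jump_below_threshold; [apply jump_InM; auto|].
  intros i Hi. apply jump_pot_bound; auto.
Qed.

(** * The dynamics: one jump at time 0, then rest *)

Definition jump_sol (X0 : nat -> nat -> R) (t : R) :=
  if Rle_dec t 0 then X0 else jump n X0.

Lemma jump_sol_pos X0 t : 0 < t -> jump_sol X0 t = jump n X0.
Proof. intros H. unfold jump_sol. destruct (Rle_dec t 0); [lra|reflexivity]. Qed.

Lemma jump_sol_FlowPt X0 s : InM n X0 -> 0 < s -> FlowPt n (jump_sol X0) s.
Proof.
  intros HX Hs. split.
  - intros i Hi. rewrite jump_sol_pos by auto. apply jump_pot_bound; auto.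
  - intros i m Hi Hm. simpl. apply derivable_pt_lim_locally_const with (eps := s); auto.
    intros u Hu. apply Rabs_def2 in Hu. rewrite !jump_sol_pos by lra. reflexivity.
Qed.

Lemma jump_sol_Sol X0 : InM n X0 -> Sol n X0 (jump_sol X0).
Proof.
  intros HX. split; [|split; [|split]].
  - unfold jump_sol. destruct (Rle_dec 0 0); [reflexivity|lra].
  - intros t Ht. unfold jump_sol. destruct (Rle_dec t 0); auto. apply jump_InM; auto.
  - intros t Ht. exists 1. split; [lra|split].
    + intros s Hs. apply jump_sol_FlowPt; auto; lra.
    + intros i m e He. exists 1. split; [lra|]. intros s Hs.
      rewrite jump_sol_pos by lra.
      assert (E : jump n (jump_sol X0 t) = jump n X0).
      { unfold jump_sol. destruct (Rle_dec t 0); auto. apply jump_idem; auto. }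
      rewrite E, Rminus_diag, Rabs_R0; auto.
  - intros t Ht. exists t. split; auto. split.
    + intros s Hs _. apply jump_sol_FlowPt; auto.
    + intros i m e He. exists t. split; auto. intros s Hs.
      rewrite !jump_sol_pos, Rminus_diag, Rabs_R0 by lra; auto.
Qed.

(* A coordinate with zero derivative on an interval is constant there, and the
   one-sided limit conditions of [Sol] identify that constant. *)
Lemma Sol_const_after X0 Y : Sol n X0 Y -> forall t, 0 <= t ->
  exists eps, 0 < eps /\ forall s, t < s < t + eps -> Y s = jump n (Y t).
Proof.
  intros [_ [HM [HR _]]] t Ht. destruct (HR t Ht) as [eps [He [HF HC]]].
  exists eps. split; auto. intros s Hs.
  apply InM_ext; [apply HM; lra|apply jump_InM, HM; lra|]. intros i Hi.
  assert (Hc : forall s1 s2, t < s1 < t + eps -> t < s2 < t + eps -> Y s1 i O = Y s2 i O).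
  { apply (derivable_pt_lim0_const (fun u => Y u i O)). intros u Hu.
    destruct (HF u Hu) as [_ Hd]. apply (Hd i O Hi). simpl; lia. }
  apply Rabs_lt_all_eq. intros e He'. destruct (HC i O e He') as [d [Hd Hd']].
  set (s' := t + Rmin d eps / 2).
  assert (0 < Rmin d eps) by (apply Rmin_pos; auto).
  pose proof (Rmin_l d eps). pose proof (Rmin_r d eps).
  rewrite (Hc s s') by (auto; unfold s'; lra). apply Hd'. unfold s'; lra.
Qed.

Lemma Sol_const_before X0 Y : Sol n X0 Y -> forall t, 0 < t ->
  exists eps, 0 < eps /\ eps <= t /\
    (forall s, t - eps < s < t -> Y s = Y t) /\ (forall i, (i < N)%nat -> Y t i O < 1).
Proof.
  intros [_ [HM [_ HL]]] t Ht. destruct (HL t Ht) as [eps0 [He0 [HF HC]]].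
  set (eps := Rmin eps0 t).
  assert (0 < eps) by (apply Rmin_pos; auto).
  assert (eps <= eps0) by apply Rmin_l. assert (eps <= t) by apply Rmin_r.
  assert (Hconst : forall s, t - eps < s < t -> Y s = Y t).
  { intros s Hs. apply InM_ext; [apply HM; lra|apply HM; lra|]. intros i Hi.
    assert (Hc : forall s1 s2, t - eps < s1 < t -> t - eps < s2 < t -> Y s1 i O = Y s2 i O).
    { apply (derivable_pt_lim0_const (fun u => Y u i O)). intros u Hu.
      destruct (HF u ltac:(lra) ltac:(lra)) as [_ Hd]. apply (Hd i O Hi). simpl; lia. }
    apply Rabs_lt_all_eq. intros e He'. destruct (HC i O e He') as [d [Hd Hd']].
    set (s' := t - Rmin d eps / 2).
    assert (0 < Rmin d eps) by (apply Rmin_pos; auto).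
    pose proof (Rmin_l d eps). pose proof (Rmin_r d eps).
    rewrite (Hc s s') by (auto; unfold s'; lra). apply Hd'. unfold s'; lra. }
  exists eps. split; [auto|split; [auto|split; [exact Hconst|]]].
  intros i Hi. rewrite <- (Hconst (t - eps / 2)) by lra.
  destruct (HF (t - eps / 2) ltac:(lra) ltac:(lra)) as [Hp _]. apply Hp; auto.
Qed.

Lemma Sol_locally_const X0 Y : Sol n X0 Y -> forall t, 0 < t ->
  exists eps, 0 < eps /\ forall s, Rabs (s - t) < eps -> Y s = Y t.
Proof.
  intros HS t Ht.
  destruct (Sol_const_before X0 Y HS t Ht) as [e1 [He1 [He1t [H1 Hsub]]]].
  destruct (Sol_const_after X0 Y HS t ltac:(lra)) as [e2 [He2 H2]].
  assert (Hfix : jump n (Y t) = Y t).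
  { destruct HS as [_ [HM _]]. apply jump_below_threshold; [apply HM; lra|exact Hsub]. }
  exists (Rmin e1 e2). split; [apply Rmin_pos; auto|].
  pose proof (Rmin_l e1 e2). pose proof (Rmin_r e1 e2).
  intros s Hs. apply Rabs_def2 in Hs.
  destruct (Rtotal_order s t) as [h|[h|h]].
  - apply H1; lra.
  - subst; reflexivity.
  - rewrite <- Hfix. apply H2; lra.
Qed.

Lemma Sol_pos X0 Y : Sol n X0 Y -> forall t, 0 < t -> Y t = jump n X0.
Proof.
  intros HS t Ht.
  destruct (Sol_const_after X0 Y HS 0 ltac:(lra)) as [e0 [He0 H0]].
  assert (HY0 : Y 0 = X0) by apply HS. rewrite HY0 in H0.
  set (s0 := Rmin (e0 / 2) t).
  assert (0 < s0) by (apply Rmin_pos; lra).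
  assert (s0 <= e0 / 2) by apply Rmin_l. assert (s0 <= t) by apply Rmin_r.
  rewrite <- (H0 s0) by lra.
  apply functional_extensionality; intros i.
  apply functional_extensionality; intros m.
  destruct (Req_dec s0 t) as [->|Hne]; [reflexivity|].
  apply (derivable_pt_lim0_const (fun u => Y u i m) 0 (t + 1)); try lra.
  intros u Hu. destruct (Sol_locally_const X0 Y HS u ltac:(lra)) as [e [He Hc]].
  apply derivable_pt_lim_locally_const with e; auto. intros v Hv. rewrite Hc; auto.
Qed.

(** * Injectivity of [jump] on a firing pattern *)

Definition gain (X : nat -> nat -> R) i :=
  sumR N (fun h => if negb (Nat.eqb h i) && fires X h && adj h i then /10 else 0).

Lemma gain_bound X i : 0 <= gain X i <= 1/2.
Proof.
  pose proof (sumR_indicator_bound N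
    (fun h => negb (Nat.eqb h i) && fires X h && adj h i) (/10) HN ltac:(lra)).
  unfold gain. lra.
Qed.

Lemma jump_silent X i : InM n X -> (i < N)%nat -> fires X i = false ->
  jump n X i O = X i O + (1 - X i O) * gain X i.
Proof.
  intros HX Hi Hs. rewrite jump_pot by auto. rewrite Hs. f_equal.
  unfold gain. rewrite <- sumR_scal. apply sumR_ext. intros k Hk.
  rewrite spikes_fires by auto.
  replace (Nat.ltb k N) with true by (symmetry; apply Nat.ltb_lt; auto).
  assert (Hlt : X i O < 1).
  { unfold fires in Hs. destruct (Rle_dec 1 (X i O)); [discriminate|lra]. }
  simpl. destruct (negb (Nat.eqb k i)); simpl; [|ring].
  destruct (fires X k); simpl; [|ring]. destruct (adj k i); [|ring].
  unfold weak_excitation. destruct (Rlt_dec (X i O) 1); [|lra]. field.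
Qed.

Lemma jump_inj_fires X Y : InM n X -> InM n Y -> jump n X = jump n Y ->
  (forall j, (j < N)%nat -> fires X j = fires Y j) -> X = Y.
Proof.
  intros HX HY HJ Hf. apply InM_ext; auto. intros i Hi.
  assert (HK : gain X i = gain Y i).
  { unfold gain. apply sumR_ext. intros k Hk. rewrite Hf; auto. }
  pose proof (InM_pot_bound X HX i Hi). pose proof (InM_pot_bound Y HY i Hi).
  destruct (fires X i) eqn:E.
  - assert (E' : fires Y i = true) by (rewrite <- Hf; auto).
    unfold fires in E, E'. destruct (Rle_dec 1 (X i O)); [|discriminate].
    destruct (Rle_dec 1 (Y i O)); [|discriminate]. lra.
  - assert (E' : fires Y i = false) by (rewrite <- Hf; auto).
    assert (H1 := jump_silent X i HX Hi E). assert (H2 := jump_silent Y i HY Hi E').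
    rewrite HJ, H2, HK in H1. pose proof (gain_bound Y i).
    assert (Hz : (X i O - Y i O) * (1 - gain Y i) = 0) by lra.
    apply Rmult_integral in Hz. destruct Hz; lra.
Qed.

Definition fan_in (S : nat -> bool) j :=
  sumR N (fun h => if negb (Nat.eqb h j) && S h && adj h j then 1 else 0).

Lemma fan_in_bound S j : 0 <= fan_in S j <= 5.
Proof.
  pose proof (sumR_indicator_bound N
    (fun h => negb (Nat.eqb h j) && S h && adj h j) 1 HN ltac:(lra)).
  unfold fan_in. lra.
Qed.

(* A silent neuron at - k/(10 - k) receiving k actions is lifted exactly to 0;
   it stays in [-1,0] because k <= 5. *)
Definition resetting_state (S : nat -> bool) : nat -> nat -> R :=
  fun j m => if Nat.ltb j N && Nat.eqb m O then
    (if S j then 1 else - fan_in S j / (10 - fan_in S j)) else 0.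

Lemma resetting_state_pot S j : (j < N)%nat ->
  resetting_state S j O = if S j then 1 else - fan_in S j / (10 - fan_in S j).
Proof.
  intros Hj. unfold resetting_state.
  replace (Nat.ltb j N) with true by (symmetry; apply Nat.ltb_lt; auto). reflexivity.
Qed.

Lemma silent_pot_bound S j : -1 <= - fan_in S j / (10 - fan_in S j) <= 0.
Proof.
  pose proof (fan_in_bound S j). split.
  - apply Rmult_le_reg_r with (10 - fan_in S j); [lra|]. field_simplify; lra.
  - assert (0 <= fan_in S j / (10 - fan_in S j)).
    { apply Rmult_le_pos; [lra|]. left; apply Rinv_0_lt_compat; lra. }
    unfold Rdiv in *. lra.
Qed.

Lemma resetting_state_InM S : InM n (resetting_state S).
Proof.
  split.
  - intros i Hi. split.
    + intros m Hm. simpl in Hm. replace m with O by lia. simpl.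
      rewrite resetting_state_pot by auto.
      destruct (S i); [lra|]. pose proof (silent_pot_bound S i); lra.
    + intros m Hm. simpl in Hm. unfold resetting_state.
      replace (Nat.eqb m 0) with false by (symmetry; apply Nat.eqb_neq; lia).
      rewrite andb_false_r; reflexivity.
  - intros i m Hi. unfold resetting_state. simpl in Hi.
    replace (Nat.ltb i N) with false by (symmetry; apply Nat.ltb_ge; auto). reflexivity.
Qed.

Lemma resetting_state_fires S j : (j < N)%nat -> fires (resetting_state S) j = S j.
Proof.
  intros Hj. unfold fires. rewrite resetting_state_pot by auto. destruct (S j).
  - destruct (Rle_dec 1 1); auto; lra.
  - pose proof (silent_pot_bound S j). destruct (Rle_dec 1 _); auto; lra.
Qed.

Lemma jump_resetting_state S : jump n (resetting_state S) = fun _ _ => 0.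
Proof.
  pose proof (resetting_state_InM S) as HR.
  apply InM_ext; [apply jump_InM; auto| |].
  { split; [intros i Hi; apply InMi_zero|reflexivity]. }
  intros i Hi. destruct (S i) eqn:E.
  - rewrite jump_pot, resetting_state_fires, E by auto. reflexivity.
  - rewrite jump_silent by (auto; rewrite resetting_state_fires; auto).
    assert (HK : gain (resetting_state S) i = fan_in S i / 10).
    { unfold gain, fan_in, Rdiv. rewrite Rmult_comm, <- sumR_scal. apply sumR_ext.
      intros k Hk. rewrite resetting_state_fires by auto. destruct (_ && _ && _); lra. }
    rewrite HK, resetting_state_pot, E by auto. pose proof (fan_in_bound S i). field. lra.
Qed.

End FrozenNet.

Lemma frozenNet_network N adj : (2 <= N)%nat -> (N <= 5)%nat ->
  (forall i, (i < N)%nat -> exists j, (j < N)%nat /\ j <> i /\ adj i j = true) ->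
  IsNetwork (frozenNet N adj).
Proof.
  intros H2 H5 Hout. split; [exact H2|split].
  - intros i Hi. split; [simpl; lia|]. split; [intros; simpl; lra|]. split; [simpl; lra|].
    split; [|split].
    + exists 0. intros x y _ _. unfold normi. simpl.
      rewrite Rminus_diag, Rabs_R0. lra.
    + intros j Hj Hji. destruct (adj i j) eqn:E.
      * right; left. intros x _. simpl. rewrite E. apply weak_excitation_pos.
      * left. apply Zero_frozenNet; auto.
    + destruct (Hout i Hi) as [j [Hj [Hji Ha]]]. exists j. split; auto. split; auto.
      apply NZ_frozenNet; auto.
  - intros X0 HX. split.
    + exists (jump_sol N adj X0). apply jump_sol_Sol; auto.
    + intros X Y HXs HYs t Ht. destruct (Rle_lt_or_eq_dec 0 t Ht) as [Hp|<-].
      * rewrite (Sol_pos N adj H5 X0 X HXs t Hp), (Sol_pos N adj H5 X0 Y HYs t Hp).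
        reflexivity.
      * destruct HXs as [-> _]. destruct HYs as [-> _]. reflexivity.
Qed.

Lemma frozenNet_Dale N adj : Dale (frozenNet N adj).
Proof.
  intros i Hi. left. intros j Hj Hji Hnz x _. apply NZ_frozenNet in Hnz. simpl.
  rewrite Hnz. apply weak_excitation_pos.
Qed.

(** * Counting firing patterns *)

Lemma injective_bounded_le (a b : nat) (f : nat -> nat) :
  (forall k, (k < a)%nat -> (f k < b)%nat) ->
  (forall k k', (k < a)%nat -> (k' < a)%nat -> f k = f k' -> k = k') -> (a <= b)%nat.
Proof.
  intros Hb Hi.
  assert (H : (length (map f (seq 0 a)) <= length (seq 0 b))%nat).
  { apply NoDup_incl_length.
    - apply NoDup_map_NoDup_ForallPairs; [|apply seq_NoDup].
      intros x y Hx Hy. apply in_seq in Hx. apply in_seq in Hy. apply Hi; lia.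
    - intros y Hy. apply in_map_iff in Hy. destruct Hy as [x [<- Hx]].
      apply in_seq in Hx. apply in_seq. specialize (Hb x ltac:(lia)). lia. }
  rewrite length_map, !length_seq in H. exact H.
Qed.

Fixpoint bits_code (N : nat) (f : nat -> bool) : nat :=
  match N with
  | O => O
  | S N' => 2 * bits_code N' (fun j => f (S j)) + Nat.b2n (f O)
  end.

Lemma testbit_bits_code N f j : (j < N)%nat -> Nat.testbit (bits_code N f) j = f j.
Proof.
  revert f j; induction N as [|N IH]; intros f j Hj; [lia|].
  change (bits_code (S N) f) with (2 * bits_code N (fun j => f (S j)) + Nat.b2n (f O))%nat.
  destruct j as [|j]; [apply Nat.testbit_0_r|].
  rewrite Nat.testbit_succ_r. apply (IH (fun k => f (S k))). lia.
Qed.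

Lemma bits_code_lt N f : (bits_code N f < 2 ^ N)%nat.
Proof.
  revert f; induction N as [|N IH]; intros f; [simpl; lia|].
  change (bits_code (S N) f) with (2 * bits_code N (fun j => f (S j)) + Nat.b2n (f O))%nat.
  specialize (IH (fun j => f (S j))). rewrite Nat.pow_succ_r'.
  destruct (f O); simpl Nat.b2n; lia.
Qed.

Lemma testbit_inj_lt N k k' : (k < 2 ^ N)%nat -> (k' < 2 ^ N)%nat ->
  (forall j, (j < N)%nat -> Nat.testbit k j = Nat.testbit k' j) -> k = k'.
Proof.
  intros Hk Hk' H. apply Nat.bits_inj. intros j.
  destruct (Nat.lt_ge_cases j N) as [Hj|Hj]; auto.
  rewrite <- (Nat.mod_small k (2 ^ N)), <- (Nat.mod_small k' (2 ^ N)) by auto.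
  rewrite !Nat.mod_pow2_bits_high by auto. reflexivity.
Qed.

(* psi commutes with the dynamics at time 1, where both solutions have jumped. *)
Lemma Embeds_frozenNet_jump N adj N' adj' psi : (N <= 5)%nat -> (N' <= 5)%nat ->
  (forall X, InM (frozenNet N' adj') X -> InM (frozenNet N adj) (psi X)) ->
  (forall X0 X' X, InM (frozenNet N' adj') X0 -> Sol (frozenNet N' adj') X0 X' ->
     Sol (frozenNet N adj) (psi X0) X -> forall t, 0 <= t -> psi (X' t) = X t) ->
  forall X, InM (frozenNet N' adj') X ->
    psi (jump (frozenNet N' adj') X) = jump (frozenNet N adj) (psi X).
Proof.
  intros HN HN' Hin Hcom X HX.
  pose proof (Hcom X (jump_sol N' adj' X) (jump_sol N adj (psi X)) HX
    (jump_sol_Sol N' adj' HN' X HX) (jump_sol_Sol N adj HN (psi X) (Hin X HX)) 1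
    ltac:(lra)) as H.
  rewrite !jump_sol_pos in H by lra. exact H.
Qed.

Theorem frozenNet_not_Embeds N adj N' adj' : (N < N')%nat -> (N' <= 5)%nat ->
  ~ Embeds (frozenNet N' adj') (frozenNet N adj).
Proof.
  intros HNN' HN' [psi [Hin [_ [Hinj Hcom]]]].
  assert (HN : (N <= 5)%nat) by lia.
  set (P := fun k : nat => resetting_state N' adj' (Nat.testbit k)).
  assert (HP : forall k, InM (frozenNet N' adj') (P k))
    by (intros; apply resetting_state_InM; exact HN').
  assert (HPjump : forall k, jump (frozenNet N adj) (psi (P k)) = psi (fun _ _ => 0)).
  { intros k. rewrite <- (Embeds_frozenNet_jump N adj N' adj' psi) by auto.
    unfold P. rewrite jump_resetting_state by auto. reflexivity. }
  set (code := fun k => bits_code N (fires (psi (P k)))).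
  assert (Hpow : (2 ^ N' <= 2 ^ N)%nat).
  { apply (injective_bounded_le _ _ code); [intros; apply bits_code_lt|].
    intros k k' Hk Hk' Hcode.
    assert (Hfires : forall j, (j < N)%nat -> fires (psi (P k)) j = fires (psi (P k')) j).
    { intros j Hj. rewrite <- (testbit_bits_code N (fires (psi (P k))) j Hj),
        <- (testbit_bits_code N (fires (psi (P k'))) j Hj).
      fold (code k) (code k'). rewrite Hcode. reflexivity. }
    assert (E : P k = P k').
    { apply Hinj; auto. apply (jump_inj_fires N adj HN); auto. rewrite !HPjump. reflexivity. }
    apply (testbit_inj_lt N'); auto. intros j Hj.
    rewrite <- (resetting_state_fires N' adj' HN' (Nat.testbit k) j Hj),
      <- (resetting_state_fires N' adj' HN' (Nat.testbit k') j Hj).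
    fold (P k) (P k'). rewrite E. reflexivity. }
  apply Nat.pow_lt_mono_r_iff with (a := 2%nat) in HNN'; lia.
Qed.

(* In [net4], neurons 0 and 1 are structurally identical and form one
   synaptical unit: 0 only acts on 2, 1 only on 3.  Relabelling neuron i of
   [net4] as [pred i] gives the unit-level connectivity of [net3]. *)
Definition adj3 (i j : nat) : bool :=
  match i, j with
  | 0, 1 | 0, 2 | 1, 0 | 1, 2 | 2, 0 => true
  | _, _ => false end%nat.
Definition adj4 (i j : nat) : bool :=
  match i, j with
  | 0, 2 | 1, 3 | 2, 0 | 2, 1 | 2, 3 | 3, 0 | 3, 1 => true
  | _, _ => false end%nat.

Definition net3 : Net := frozenNet 3 adj3.
Definition net4 : Net := frozenNet 4 adj4.

Ltac case_lt4 x := destruct x as [|[|[|[|x]]]]; try lia.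

Lemma SameF_frozenNet N adj N' adj' i j : SameF (frozenNet N adj) i (frozenNet N' adj') j.
Proof. repeat split. Qed.

Lemma StructId_frozenNet N adj i j : StructId (frozenNet N adj) i j ->
  adj i j = false /\ adj j i = false.
Proof.
  intros [_ [_ [_ [_ [Z1 [Z2 _]]]]]].
  split; apply not_true_is_false; intros E.
  - exact (proj2 (NZ_frozenNet N adj i j) E Z1).
  - exact (proj2 (NZ_frozenNet N adj j i) E Z2).
Qed.

Lemma StructId_net4 i j : (i < 2)%nat -> (j < 2)%nat -> i <> j -> StructId net4 i j.
Proof.
  intros Hi Hj Hij. split; [simpl; lia|split; [simpl; lia|split; [lia|]]].
  split; [apply SameF_frozenNet|].
  split; [apply Zero_frozenNet; case_lt4 i; case_lt4 j; reflexivity|].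
  split; [apply Zero_frozenNet; case_lt4 i; case_lt4 j; reflexivity|].
  intros h Hh H0 H1 x _. simpl in Hh. case_lt4 h; case_lt4 i; case_lt4 j; reflexivity.
Qed.

Lemma ValidUS_net3 : ValidUS net3 3 (fun i => i) (fun _ => 1%nat) (fun _ => 0%nat).
Proof.
  split; [intros i Hi; simpl in Hi; lia|split; [|split; [|split; [|split]]]].
  - intros p Hp. split; [intros i [Hi _]; auto|split; [exists p; simpl; split; auto; lia|split]].
    + intros i j [_ Hi] [_ Hj] Hne. lia.
    + intros Bs Hsub Hb Hpw i Hi. split; [apply Hb; auto|].
      destruct (Nat.eq_dec i p) as [|Hne]; auto. exfalso.
      assert (Bp : Bs p) by (apply Hsub; simpl; split; auto).
      destruct (StructId_frozenNet _ _ _ _ (Hpw p i Bp Hi ltac:(auto))) as [E1 E2].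
      specialize (Hb i Hi). simpl in Hb. case_lt4 p; case_lt4 i; discriminate.
  - intros; lia.
  - intros p b Hp Hb. exists p. unfold InUnit. simpl. split; [lia|split; [auto|lia]].
  - intros p Hp i i' h Hi Hi' Hh Hpi Hpi' Hne. lia.
  - intros p Hp c0 g Hg _. specialize (Hg p ltac:(simpl; lia) eq_refl). lia.
Qed.

Lemma ValidUS_net4 : ValidUS net4 3 Nat.pred (fun _ => 1%nat) (fun _ => 0%nat).
Proof.
  split; [intros i Hi; simpl in Hi; case_lt4 i; simpl; lia|split; [|split; [|split; [|split]]]].
  - intros p Hp. split; [intros i [Hi _]; auto|split].
    { exists (S p). simpl. split; auto; lia. }
    split.
    + intros i j [Hi Hpi] [Hj Hpj] Hne. simpl in Hi, Hj.
      apply StructId_net4; auto; case_lt4 i; case_lt4 j; simpl in *; lia.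
    + intros Bs Hsub Hb Hpw i Hi. split; [apply Hb; auto|].
      destruct (Nat.eq_dec (Nat.pred i) p) as [|Hne]; auto. exfalso.
      assert (Bp : Bs (S p)) by (apply Hsub; simpl; split; auto; lia).
      assert (Hne' : S p <> i) by (intro; subst; simpl in Hne; lia).
      destruct (StructId_frozenNet _ _ _ _ (Hpw (S p) i Bp Hi Hne')) as [E1 E2].
      specialize (Hb i Hi). simpl in Hb. case_lt4 p; case_lt4 i; simpl in *; try lia; discriminate.
  - intros; lia.
  - intros p b Hp Hb. exists (S p). unfold InUnit. simpl. split; [lia|split; [auto|lia]].
  - intros p Hp i i' h Hi Hi' Hh Hpi Hpi' Hne _ Hph N1 N2.
    apply NZ_frozenNet in N1. apply NZ_frozenNet in N2. simpl in *.
    case_lt4 i; case_lt4 i'; case_lt4 h; simpl in *; try lia; discriminate.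
  - intros p Hp c0 g Hg _. specialize (Hg (S p) ltac:(simpl; lia) eq_refl). lia.
Qed.

Ltac DUB_zero :=
  left; split;
  [ intros i h [Hi [Hpi Hbi]] [Hh Hph] Hne; simpl in *; case_lt4 i; case_lt4 h;
    simpl in *; try lia; apply Zero_frozenNet; reflexivity
  | intros; reflexivity ].

Ltac DUB_edge I H :=
  right; exists I; split; [unfold InUnit; simpl; lia|split;
  [exists H; split; [unfold InPart; simpl; lia|split; [lia|apply NZ_frozenNet; reflexivity]]
  | intros h x [Hh Hph] Hne _; simpl in *; case_lt4 h; simpl in *; try lia; reflexivity]].

Lemma SynEquiv_net3_net4 : SynEquiv net3 net4.
Proof.
  exists 3%nat, (fun i => i), (fun _ => 1%nat), (fun _ => 0%nat),
         3%nat, Nat.pred, (fun _ => 1%nat), (fun _ => 0%nat),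
         (fun p => p), (fun _ _ => 0%nat).
  split; [exact ValidUS_net3|split; [exact ValidUS_net4|]].
  split; [reflexivity|split; [reflexivity|]].
  split; [auto|split; [auto|split; [intros q Hq; exists q; auto|split; [|split]]]].
  - intros p Hp. split; [intros; lia|split; [intros; lia|intros b' Hb'; exists 0%nat; split; lia]].
  - intros p b q Hp Hb Hq. replace b with 0%nat by lia.
    exists (if adj3 p q then weak_excitation else fun _ => 0).
    case_lt4 p; case_lt4 q; simpl; split.
    all: first [ DUB_zero
               | DUB_edge 0%nat 1%nat | DUB_edge 0%nat 2%nat | DUB_edge 1%nat 0%nat
               | DUB_edge 1%nat 2%nat | DUB_edge 2%nat 0%nat | DUB_edge 2%nat 1%nat
               | DUB_edge 3%nat 0%nat | DUB_edge 1%nat 3%nat | DUB_edge 2%nat 3%nat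
               | DUB_edge 3%nat 1%nat ].
  - intros; apply SameF_frozenNet.
Qed.

Lemma net3_network : IsNetwork net3.
Proof.
  apply frozenNet_network; try lia. intros i Hi. case_lt4 i.
  - exists 1%nat; simpl; repeat split; lia.
  - exists 0%nat; simpl; repeat split; lia.
  - exists 0%nat; simpl; repeat split; lia.
Qed.

Lemma net4_network : IsNetwork net4.
Proof.
  apply frozenNet_network; try lia. intros i Hi. case_lt4 i.
  - exists 2%nat; simpl; repeat split; lia.
  - exists 3%nat; simpl; repeat split; lia.
  - exists 0%nat; simpl; repeat split; lia.
  - exists 0%nat; simpl; repeat split; lia.
Qed.

Theorem mainTheorem6 :
  exists n : Net, IsNetwork n /\ Dale n /\ ~ DynOptimum n.
Proof.
  exists net3. split; [exact net3_network|split; [apply frozenNet_Dale|]].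
  intros Hopt. apply (frozenNet_not_Embeds 3 adj3 4 adj4); [lia|lia|].
  apply Hopt; [exact net4_network|exact SynEquiv_net3_net4].
Qed.
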